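(* Let $\mathcal J_1=(J_1,R_1,\sigma_1)$ and $\mathcal J_2=(J_2,R_2,\sigma_2)$ form a generalized Kähler structure on a real $4$-dimensional Lie algebra $\mathfrak g$, and assume neither $\mathcal J_1$ nor $\mathcal J_2$ is of type $2$. Then either $\mathcal J_1$ and $\mathcal J_2$ are both of type $0$, or both are of type $1$; in the latter case $\operatorname{Im}R_1\cap\operatorname{Im}R_2=\{0\}$.
   Context: Let $\mathfrak g$ be a real finite-dimensional Lie algebra, $\Phi(\mathfrak g)=\mathfrak g\oplus\mathfrak g^*$ with the neutral pairing $\langle u+\alpha,v+\beta\rangle=\tfrac12(\alpha(v)+\beta(u))$ and the bracket $[u+\alpha,v+\beta]=[u,v]+\mathrm{ad}_u^t\beta-\mathrm{ad}_v^t\alpha$, where $(\mathrm{ad}_u^t\alpha)(v)=-\alpha([u,v])$. A generalized complex structure on $\mathfrak g$ is an endomorphism $K$ of $\Phi(\mathfrak g)$ with $K^2=-\mathrm{Id}$, $\langle Ka,b\rangle+\langle a,Kb\rangle=0$ for all $a,b$, and vanishing Nijenhuis torsion $N_K(a,b)=[Ka,Kb]-K[Ka,b]-K[a,Kb]+K^2[a,b]$; it is written $K=\begin{pmatrix}J&R\\ \sigma&-J^*\end{pmatrix}$ and denoted $(J,R,\sigma)$. Its type is $\tfrac12\dim(\operatorname{Im}R)^0$; in dimension 4 type 0 means $R$ invertible, type 1 means $\operatorname{rank}R=2$, type 2 means $R=0$. A generalized Kähler structure on $\mathfrak g$ is a pair of commuting generalized complex structures $\mathcal J_1,\mathcal J_2$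 such that the symmetric form $G(u,v)=\langle\mathcal J_1\mathcal J_2u,v\rangle$ on $\Phi(\mathfrak g)$ is positive definite. *)

(* A real 4-dimensional Lie algebra is modelled on 'rV[R]_4
   (R : realType = the reals), elements of g* are row vectors in the dual
   basis, Phi(g) = g (+) g* is 'rV_(4+4) = row_mx u alpha, and endomorphisms of
   Phi(g) are matrices acting on the right: x |-> x *m K.
   With K = block_mx A B C D we get
     (row_mx u alpha) *m K = row_mx (u *m A + alpha *m C) (u *m B + alpha *m D),
   so J = A (ulsubmx K), R = C (dlsubmx K : g* -> g), sigma = B, -J^* = D. *)
From HB Require Import structures.
From mathcomp Require Import all_boot all_order all_algebra.
From mathcomp Require Import reals.
Set Implicit Arguments. Unset Strict Implicit. Unset Printing Implicit Defensive.
Import Order.TTheory GRing.Theory Num.Theory.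
Local Open Scope ring_scope.

Section Defs.
Variable R : realType.
Local Notation g := 'rV[R]_4.
Local Notation Phi := 'rV[R]_(4 + 4).

Definition lie_bracket (br : g -> g -> g) : Prop :=
  [/\ forall (a : R) (u v w : g), br (a *: u + v) w = a *: br u w + br v w,
      forall u : g, br u u = 0 &
      forall u v w : g, br u (br v w) + br v (br w u) + br w (br u v) = 0].

Definition evalf (alpha v : g) : R := \sum_(i < 4) alpha 0 i * v 0 i.

Definition adt (br : g -> g -> g) (u alpha : g) : g :=
  \row_(j < 4) - evalf alpha (br u (delta_mx 0 j)).

Definition npair (x y : Phi) : R :=
  2^-1 * (evalf (rsubmx x) (lsubmx y) + evalf (rsubmx y) (lsubmx x)).

Definition cbr (br : g -> g -> g) (x y : Phi) : Phi :=
  row_mx (br (lsubmx x) (lsubmx y))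
         (adt br (lsubmx x) (rsubmx y) - adt br (lsubmx y) (rsubmx x)).

Definition app (K : 'M[R]_(4 + 4)) (x : Phi) : Phi := x *m K.

Definition nijenhuis (br : g -> g -> g) (K : 'M[R]_(4 + 4)) (a b : Phi) : Phi :=
  cbr br (app K a) (app K b) - app K (cbr br (app K a) b)
  - app K (cbr br a (app K b)) + app K (app K (cbr br a b)).

Definition gen_complex (br : g -> g -> g) (K : 'M[R]_(4 + 4)) : Prop :=
  [/\ K *m K = - 1%:M,
      forall a b : Phi, npair (app K a) b + npair a (app K b) = 0 &
      forall a b : Phi, nijenhuis br K a b = 0].

Definition Rblock (K : 'M[R]_(4 + 4)) : 'M[R]_4 := dlsubmx K.

(* type = 1/2 dim (Im R)^0, where (Im R)^0 = { alpha in g* | alpha(Im R) = 0 }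
   = row kernel of R^T *)
Definition gc_type (K : 'M[R]_(4 + 4)) : nat := (\rank (kermx (Rblock K)^T))./2.

Definition gen_kahler (br : g -> g -> g) (K1 K2 : 'M[R]_(4 + 4)) : Prop :=
  [/\ gen_complex br K1, gen_complex br K2, K1 *m K2 = K2 *m K1 &
      forall x : Phi, x != 0 -> 0 < npair (app K1 (app K2 x)) x].

End Defs.

(* Let C_i := Rblock K_i and G := dlsubmx (K1 K2).  Compatibility with the
   neutral pairing makes the C_i skew and G symmetric, and the generalized
   Kaehler condition makes G positive definite.  The lower-left blocks of the
   identities satisfied by K1 K2 and K1 -+ K2 give
   C1 G^-1 C1 + C2 G^-1 C2 = -G and C1 G^-1 C2 = - C2 G^-1 C1, i.e. the
   A_i := C_i G^-1 are anticommuting G-skew-adjoint operators with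
   A1^2 + A2^2 = -1.  In dimension 4 such a nonzero A_i has rank 2 or 4; if A2
   has rank 2 then A1 vanishes on its (A1-stable) image, so both ranks agree;
   and two rank-2 blocks with trivial common kernel have complementary images. *)
From HB Require Import structures.
From mathcomp Require Import all_boot all_order all_algebra.
From mathcomp Require Import reals.
From mathcomp Require Import zify.
Set Implicit Arguments. Unset Strict Implicit. Unset Printing Implicit Defensive.
Import Order.TTheory GRing.Theory Num.Theory.
Local Open Scope ring_scope.

Section BlockProducts.
Variable R : pzRingType.

Lemma dlsubmxM m1 m2 n1 n2 p1 p2 (M : 'M[R]_(m1 + m2, n1 + n2))
    (N : 'M[R]_(n1 + n2, p1 + p2)) :
  dlsubmx (M *m N) = dlsubmx M *m ulsubmx N + drsubmx M *m dlsubmx N.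
Proof. by rewrite -{1}[M]submxK -{1}[N]submxK mulmx_block block_mxKdl. Qed.

Definition pairing_mx n : 'M[R]_(n + n) := block_mx 0 1%:M 1%:M 0.

Lemma pairing_mxK n : pairing_mx n *m pairing_mx n = 1%:M.
Proof.
by rewrite mulmx_block !mulmx0 !mul0mx !mulmx1 !addr0 !add0r -scalar_mx_block.
Qed.

Lemma ursubmx_pairing_conj n (M : 'M[R]_(n + n)) :
  ursubmx (pairing_mx n *m M *m pairing_mx n) = dlsubmx M.
Proof.
rewrite -[M]submxK /pairing_mx !mulmx_block.
by rewrite !mulmx0 !mul0mx !mulmx1 !mul1mx !addr0 !add0r block_mxKur block_mxKdl.
Qed.

End BlockProducts.

HB.instance Definition _ (V : nmodType) m1 m2 n1 n2 :=
  GRing.Additive.copy (@dlsubmx V m1 m2 n1 n2) (lsubmx \o dsubmx).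
HB.instance Definition _ (V : nmodType) m1 m2 n1 n2 :=
  GRing.Additive.copy (@ursubmx V m1 m2 n1 n2) (rsubmx \o usubmx).

Section CommutingComplexStructures.
Variables (R : numFieldType) (n : nat).
Implicit Types K : 'M[R]_(n + n).

Lemma double_mx_inj p q (A B : 'M[R]_(p, q)) : A + A = B + B -> A = B.
Proof.
move=> AB; apply: (@scalerI _ _ (2%:R : R)); first by rewrite pnatr_eq0.
by rewrite !scaler_nat !mulr2n.
Qed.

Lemma dlsubmx_scalar (a : R) : dlsubmx (a%:M : 'M[R]_(n + n)) = 0.
Proof. by rewrite scalar_mx_block block_mxKdl. Qed.

(* With P := K1 K2 and E := K1 - K2 one has P E = E P = E, E E = -2 (1 + P)
   and P P = 1; the lower-left blocks of these four identities determine the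
   diagonal blocks of E in terms of G := dlsubmx P, and the third one then
   collapses to the claim. *)
Lemma dlsubmx_sub_commuting_cplx K1 K2 :
  K1 *m K1 = - 1%:M -> K2 *m K2 = - 1%:M -> K1 *m K2 = K2 *m K1 ->
  dlsubmx (K1 *m K2) \in unitmx ->
  dlsubmx (K1 - K2) *m invmx (dlsubmx (K1 *m K2)) *m dlsubmx (K1 - K2)
    = - dlsubmx (K1 *m K2).
Proof.
move=> sq1 sq2 comm; set P := K1 *m K2; set E := K1 - K2.
set G := dlsubmx P => unitG; set X := dlsubmx E.
have PK1 : P *m K1 = - K2 by rewrite -mulmxA -comm mulmxA sq1 mulNmx mul1mx.
have PK2 : P *m K2 = - K1 by rewrite -mulmxA sq2 mulmxN mulmx1.
have K1P : K1 *m P = - K2 by rewrite mulmxA sq1 mulNmx mul1mx.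
have K2P : K2 *m P = - K1 by rewrite /P comm mulmxA sq2 mulNmx mul1mx.
have PE : P *m E = E by rewrite mulmxBr PK1 PK2 opprK addrC.
have EP : E *m P = E by rewrite mulmxBl K1P K2P opprK addrC.
have EE : E *m E = - (1%:M + P) - (1%:M + P).
  by rewrite mulmxBl !mulmxBr sq1 sq2 -comm !opprD !opprK [- (K1 *m K2) - _]addrC.
have PP : P *m P = 1%:M by rewrite mulmxA PK1 mulNmx sq2 opprK.
have := dlsubmxM P E; rewrite PE -/X -/G => dlPE.
have := dlsubmxM E P; rewrite EP -/X -/G => dlEP.
have := dlsubmxM E E; rewrite EE -/X raddfB raddfN raddfD /= dlsubmx_scalar -/G add0r.
have := dlsubmxM P P; rewrite PP dlsubmx_scalar -/G => dlPP.
have GiG : invmx G *m G = 1%:M by apply: mulVmx.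
have GGi : G *m invmx G = 1%:M by apply: mulmxV.
have -> : ulsubmx E = invmx G *m (X - drsubmx P *m X).
  by rewrite {1}dlPE addrK mulmxA GiG mul1mx.
have -> : drsubmx E = (X - X *m ulsubmx P) *m invmx G.
  by rewrite {1}dlEP [X *m _ + _]addrC addrK -mulmxA GGi mulmx1.
have GiP : invmx G *m drsubmx P = - ulsubmx P *m invmx G.
  have PG : drsubmx P *m G = - (G *m ulsubmx P).
    by apply/eqP; rewrite -addr_eq0 addrC -dlPP.
  by rewrite -[_ *m drsubmx P]mulmx1 -GGi mulmxA -(mulmxA _ _ G) PG mulmxN mulmxA GiG mul1mx mulNmx.
rewrite mulmxBr mulmxBl !mulmxA -(mulmxA X (invmx G)) GiP !mulNmx opprK mulmxDr !mulmxA.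
rewrite mulmxBl addrACA subrr addr0 => twice.
by apply: double_mx_inj; rewrite -twice.
Qed.

Lemma dlsubmx_commuting_cplx K1 K2 :
  K1 *m K1 = - 1%:M -> K2 *m K2 = - 1%:M -> K1 *m K2 = K2 *m K1 ->
  let C1 := dlsubmx K1 in let C2 := dlsubmx K2 in
  let G := dlsubmx (K1 *m K2) in G \in unitmx ->
  C1 *m invmx G *m C1 + C2 *m invmx G *m C2 = - G /\
  C1 *m invmx G *m C2 = - (C2 *m invmx G *m C1).
Proof.
move=> sq1 sq2 comm C1 C2 G unitG.
have sqN2 : (- K2) *m (- K2) = - 1%:M by rewrite mulmxN mulNmx opprK.
have commN : K1 *m - K2 = - K2 *m K1 by rewrite mulmxN mulNmx comm.
have GN : dlsubmx (K1 *m - K2) = (- 1) *: G by rewrite mulmxN raddfN scaleN1r.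
have unitGN : dlsubmx (K1 *m - K2) \in unitmx by rewrite GN unitmxZ ?unitrN1.
have := dlsubmx_sub_commuting_cplx sq1 sq2 comm unitG.
rewrite raddfB /= -/C1 -/C2 -/G mulmxBr !mulmxBl opprB addrACA -opprD.
set U := _ + C2 *m _ *m C2; set V := _ + C1 *m _ *m C2 => minus.
have := dlsubmx_sub_commuting_cplx sq1 sqN2 commN unitGN.
rewrite GN invmxZ; last by rewrite -GN.
rewrite invrN1 !scaleN1r opprK raddfD /= -/C1 -/C2.
rewrite mulmxN mulNmx => /oppr_inj.
rewrite mulmxDr !mulmxDl [_ + C2 *m _ *m C2]addrC addrACA -/U -/V => plus.
have V0 : V = 0.
  apply: double_mx_inj; rewrite addr0.
  have -> : V + V = (V + U) - (U - V) by rewrite addrKA opprK.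
  by rewrite [V + U]addrC plus minus subrr.
split.
- by rewrite -minus V0 subr0.
- by apply/eqP; rewrite -addr_eq0 addrC -/V V0.
Qed.
End CommutingComplexStructures.

Section SkewAdjoint.
Variables (R : realFieldType) (n : nat) (G : 'M[R]_n).
Implicit Types (A : 'M[R]_n) (u v w x y : 'rV[R]_n).

Definition bform u v : R := (u *m G *m v^T) 0 0.

Definition skew_adjoint A := (A *m G)^T = - (A *m G).

Hypothesis symG : G^T = G.
Hypothesis posG : forall v, v != 0 -> 0 < bform v v.

Lemma bform_sym u v : bform u v = bform v u.
Proof.
rewrite /bform; transitivity ((u *m G *m v^T)^T 0 0); first by rewrite [RHS]mxE.
by rewrite !trmx_mul trmxK symG mulmxA.
Qed.

Lemma bformDl u v w : bform (u + v) w = bform u w + bform v w.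
Proof. by rewrite /bform !mulmxDl mxE. Qed.

Lemma bform0l w : bform 0 w = 0.
Proof. by rewrite /bform !mul0mx mxE. Qed.

Lemma bformNr v w : bform v (- w) = - bform v w.
Proof. by rewrite /bform raddfN mulmxN [LHS]mxE. Qed.

Lemma bformMl (c : 'M[R]_1) v w : bform (c *m v) w = c 0 0 * bform v w.
Proof. by rewrite /bform {1}(mx11_scalar c) mul_scalar_mx -!scalemxAl mxE. Qed.

Lemma bform_eq0 v : bform v v = 0 -> v = 0.
Proof. by apply: contra_eq => /posG /gt_eqF ->. Qed.

Lemma bform_skew A x y : skew_adjoint A -> bform (x *m A) y = - bform x (y *m A).
Proof.
rewrite /bform /skew_adjoint trmx_mul symG => skewA.
by rewrite trmx_mul !mulmxA -(mulmxA x G) skewA mulmxN mulNmx [in RHS]mxE opprK !mulmxA.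
Qed.

Lemma bform_skew_self A x : skew_adjoint A -> bform x (x *m A) = 0.
Proof.
by move=> skewA; apply/eqP; rewrite -eqNr -bform_skew // bform_sym.
Qed.

Lemma pos_form_unitmx : G \in unitmx.
Proof.
rewrite -row_free_unit; apply: inj_row_free => v vG0; apply: bform_eq0.
by rewrite /bform vG0 mul0mx mxE.
Qed.

Lemma mx11_bform_eq0 (c : 'M[R]_1) v : v != 0 -> bform (c *m v) v = 0 -> c = 0.
Proof.
rewrite bformMl => /posG/gt_eqF nz /eqP; rewrite mulf_eq0 nz orbF => /eqP c0.
by apply/matrixP => i j; rewrite !ord1 c0 mxE.
Qed.

Lemma rank_orthogonal_pair v w :
  v != 0 -> w != 0 -> bform v w = 0 -> \rank (col_mx v w) = 2%N.
Proof.
move=> nzv nzw vw; apply/eqP; apply: inj_row_free => c.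
rewrite -[c]hsubmxK mul_row_col => cvw.
have c1 : lsubmx c = 0.
  apply: (mx11_bform_eq0 nzv); have := congr1 (bform^~ v) cvw.
  by rewrite bformDl (bformMl (rsubmx c)) (bform_sym w) vw mulr0 addr0 bform0l.
move: cvw; rewrite c1 mul0mx add0r => cw.
have c2 : rsubmx c = 0 by apply: (mx11_bform_eq0 nzw); rewrite cw bform0l.
by rewrite c2 row_mx0.
Qed.

Lemma orthogonal_span2_eq0 x v w :
  (x <= v + w)%MS -> bform x v = 0 -> bform x w = 0 -> x = 0.
Proof.
case/sub_addsmxP => c -> xv xw; apply: bform_eq0.
by rewrite (bform_sym _ (_ + _)) bformDl !bformMl -!(bform_sym (_ + _)) xv xw !mulr0 addr0.
Qed.

Lemma rank_skew_adjoint_orbit A v :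
  skew_adjoint A -> (v <= A)%MS -> v != 0 -> \rank (col_mx v (v *m A)) = 2%N.
Proof.
move=> skewA /submxP[D vDA] nzv; apply: rank_orthogonal_pair; rewrite ?bform_skew_self //.
apply: contra_neq nzv => vA0; apply: bform_eq0.
by rewrite {1}vDA bform_skew // vA0 /bform trmx0 mulmx0 mxE oppr0.
Qed.

Lemma skew_adjoint_rank_ge2 A : skew_adjoint A -> A != 0 -> (2 <= \rank A)%N.
Proof.
move=> skewA /rowV0Pn[v vA nzv].
by rewrite -(rank_skew_adjoint_orbit skewA vA nzv) mxrankS // col_mx_sub vA submxMl.
Qed.

Section AnticommutingPair.
Variables A1 A2 : 'M[R]_n.
Hypotheses (skew1 : skew_adjoint A1) (skew2 : skew_adjoint A2).
Hypothesis sq_sum : A1 *m A1 + A2 *m A2 = - 1%:M.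
Hypothesis anticomm : A1 *m A2 = - (A2 *m A1).

(* a A1 lies in ker A2 and is orthogonal to a, so ker A2 has dimension at least 2. *)
Lemma anticomm_rank_lt (lt_n : (\rank A2 < n)%N) : (\rank A2 + 2 <= n)%N.
Proof.
have /rowV0Pn[a /sub_kermxP a0 nza] : kermx A2 != 0.
  by rewrite -mxrank_eq0 mxrank_ker subn_eq0 -ltnNge.
set b := a *m A1.
have b0 : b *m A2 = 0 by rewrite -mulmxA anticomm mulmxN mulmxA a0 mul0mx oppr0.
have nzb : b != 0.
  apply: contra_neq nza => b0'.
  have : a *m (A1 *m A1 + A2 *m A2) = 0 by rewrite mulmxDr !mulmxA -/b b0' a0 !mul0mx addr0.
  by rewrite sq_sum mulmxN mulmx1 => /eqP; rewrite oppr_eq0 => /eqP.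
have := mxrankS (_ : (col_mx a b <= kermx A2)%MS).
rewrite rank_orthogonal_pair ?bform_skew_self // mxrank_ker col_mx_sub.
by rewrite !sub_kermx a0 b0 eqxx; lia.
Qed.

(* Im A2 = span(v, v A2) is A1-stable and v A1 is orthogonal to it, so v A1 = 0. *)
Lemma anticomm_rank2 : \rank A2 = 2%N -> (\rank A1 < n)%N.
Proof.
move=> r2; have /rowV0Pn[v vA2 nzv] : A2 != 0 by rewrite -mxrank_eq0 r2.
set w := v *m A2; set x := v *m A1.
have spanA2 : (A2 <= v + w)%MS.
  have vwA2 : (col_mx v w <= A2)%MS by rewrite col_mx_sub vA2 submxMl.
  by rewrite addsmxE -(mxrank_leqif_sup vwA2).2 r2 rank_skew_adjoint_orbit.
have xA2 : (x <= A2)%MS.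
  have [D vDA] := submxP vA2; rewrite /x vDA -mulmxA -[A2 *m A1]opprK -anticomm.
  by rewrite mulmxN -mulNmx mulmxA submxMl.
have x0 : x = 0.
  apply: (orthogonal_span2_eq0 (submx_trans xA2 spanA2)).
    by rewrite bform_skew // bform_skew_self // oppr0.
  have wA1 : w *m A1 = - (x *m A2) by rewrite -!mulmxA anticomm mulmxN opprK.
  have xw : bform x w = - bform x w.
    transitivity (bform v (x *m A2)); first by rewrite bform_skew // wA1 bformNr opprK.
    by rewrite -[LHS]opprK -bform_skew // bform_sym.
  by apply/eqP; rewrite -eqNr -xw.
apply: contraTT nzv; rewrite -leqNgt => rA1.
have freeA1 : row_free A1 by rewrite /row_free eqn_leq rank_leq_row.
have vA1 : v *m A1 = 0 *m A1 by rewrite mul0mx -/x x0.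
by rewrite negbK (row_free_inj freeA1 vA1).
Qed.
End AnticommutingPair.

End SkewAdjoint.

Lemma capmx_skew_eq0 (F : fieldType) n (C1 C2 : 'M[F]_n) :
  C1^T = - C1 -> C2^T = - C2 ->
  (forall u : 'rV_n, u *m C1 = 0 -> u *m C2 = 0 -> u = 0) ->
  (\rank C1 + \rank C2)%N = n -> (C1 :&: C2 == (0 : 'M[F]_n))%MS.
Proof.
move=> skew1 skew2 ker0 rk.
have free12 : row_free (row_mx C1 C2).
  apply: inj_row_free => u; rewrite mul_mx_row -row_mx0 => /eq_row_mx[].
  exact: ker0.
have rk_sum : \rank (C1 + C2)%MS = n.
  by rewrite addsmxE -mxrank_tr tr_col_mx skew1 skew2 -opp_row_mx eqmx_opp; apply/eqP.
have := mxrank_sum_cap C1 C2; rewrite rk_sum rk -[X in _ = X]addn0 => /addnI/eqP.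
by rewrite mxrank_eq0 => /eqP ->; rewrite submx_refl.
Qed.

Lemma anticomm_rank_cases (R : realFieldType) (G A1 A2 : 'M[R]_4) :
  G^T = G -> (forall v, v != 0 -> 0 < bform G v v) ->
  skew_adjoint G A1 -> skew_adjoint G A2 ->
  A1 *m A1 + A2 *m A2 = - 1%:M -> A1 *m A2 = - (A2 *m A1) ->
  A2 != 0 -> \rank A2 = 2%N \/ \rank A2 = 4%N.
Proof.
move=> symG posG skew1 skew2 sq_sum anticomm nzA2.
have := skew_adjoint_rank_ge2 symG posG skew2 nzA2.
have := rank_leq_row A2; rewrite leq_eqVlt => /orP[/eqP|lt4]; first by right.
have := anticomm_rank_lt symG posG skew1 sq_sum anticomm lt4; lia.
Qed.

Lemma skew_pair_ranks (R : realFieldType) (G C1 C2 : 'M[R]_4) :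
  G^T = G -> (forall v, v != 0 -> 0 < bform G v v) ->
  C1^T = - C1 -> C2^T = - C2 ->
  C1 *m invmx G *m C1 + C2 *m invmx G *m C2 = - G ->
  C1 *m invmx G *m C2 = - (C2 *m invmx G *m C1) ->
  C1 != 0 -> C2 != 0 ->
  (\rank C1 = 4%N /\ \rank C2 = 4%N) \/
  [/\ \rank C1 = 2%N, \rank C2 = 2%N & (C1 :&: C2 == (0 : 'M[R]_4))%MS].
Proof.
move=> symG posG skewC1 skewC2 sq_sum anticomm nzC1 nzC2.
have unitG := pos_form_unitmx posG.
have skewA (C : 'M[R]_4) : C^T = - C -> skew_adjoint G (C *m invmx G).
  by rewrite /skew_adjoint -mulmxA mulVmx // mulmx1.
have rankA (C : 'M[R]_4) : \rank (C *m invmx G) = \rank C.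
  by rewrite mxrankMfree // row_free_unit unitmx_inv.
have nzA (C : 'M[R]_4) : C != 0 -> C *m invmx G != 0 by rewrite -!mxrank_eq0 rankA.
set A1 := C1 *m invmx G; set A2 := C2 *m invmx G.
have sqA : A1 *m A1 + A2 *m A2 = - 1%:M.
  by rewrite !mulmxA -mulmxDl sq_sum mulNmx mulmxV.
have anticommA : A1 *m A2 = - (A2 *m A1) by rewrite !mulmxA anticomm mulNmx.
have sqA' : A2 *m A2 + A1 *m A1 = - 1%:M by rewrite addrC.
have anticommA' : A2 *m A1 = - (A1 *m A2) by rewrite anticommA opprK.
have [skA1 skA2] := (skewA _ skewC1, skewA _ skewC2).
have := anticomm_rank_cases symG posG skA1 skA2 sqA anticommA (nzA _ nzC2).
have := anticomm_rank_cases symG posG skA2 skA1 sqA' anticommA' (nzA _ nzC1).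
rewrite !rankA => -[r1|r1] [r2|r2].
- right; split=> //; apply: capmx_skew_eq0; rewrite ?r1 ?r2 // => u uC1 uC2.
  have : u *m (C1 *m invmx G *m C1 + C2 *m invmx G *m C2) = 0.
    by rewrite mulmxDr !mulmxA uC1 uC2 !mul0mx addr0.
  rewrite sq_sum mulmxN => /eqP; rewrite oppr_eq0 => /eqP uG.
  by rewrite -[u]mulmx1 -(mulmxV unitG) mulmxA uG mul0mx.
- have := anticomm_rank2 symG posG skA2 skA1 anticommA'; rewrite !rankA r1 r2; lia.
- have := anticomm_rank2 symG posG skA1 skA2 anticommA; rewrite !rankA r1 r2; lia.
- by left.
Qed.

Section GeneralizedComplexBlocks.
Variable R : realType.
Implicit Types (K : 'M[R]_(4 + 4)) (x y : 'rV[R]_(4 + 4)) (u v : 'rV[R]_4).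
Local Notation Om := (pairing_mx R 4).

Lemma evalfE u v : evalf u v = (u *m v^T) 0 0.
Proof. by rewrite /evalf mxE; apply: eq_bigr => i _; rewrite mxE. Qed.

Lemma npairE x y : npair x y = 2^-1 * (x *m Om *m y^T) 0 0.
Proof.
rewrite -[x]hsubmxK -[y]hsubmxK /npair !row_mxKl !row_mxKr !evalfE /pairing_mx.
rewrite tr_row_mx mul_row_block !mulmx0 !mulmx1 !add0r !addr0 mul_row_col.
rewrite [in RHS]mxE; congr (_ * (_ + _)).
transitivity ((lsubmx x *m (rsubmx y)^T)^T 0 0); first by rewrite trmx_mul trmxK.
by rewrite [LHS]mxE.
Qed.

Lemma delta_entry (M : 'M[R]_(4 + 4)) i j :
  ((delta_mx 0 i : 'rV_(4 + 4)) *m M *m (delta_mx 0 j : 'rV_(4 + 4))^T) 0 0 = M i j.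
Proof. by rewrite -rowE trmx_delta -colE !mxE. Qed.

Lemma npair_skew_trmx K :
  (forall x y, npair (app K x) y + npair x (app K y) = 0) ->
  K^T = - (Om *m K *m Om).
Proof.
move=> orthK.
have KOm : K *m Om + Om *m K^T = 0.
  apply/matrixP => i j; rewrite [RHS]mxE -delta_entry.
  have := orthK (delta_mx 0 i) (delta_mx 0 j); rewrite /app !npairE -mulrDr.
  move=> /eqP; rewrite mulf_eq0 invr_eq0 pnatr_eq0 /= => /eqP <-.
  by rewrite mulmxDr mulmxDl trmx_mul !mulmxA mxE.
have OmKT : Om *m K^T = - (K *m Om) by apply/eqP; rewrite -addr_eq0 addrC KOm.
by rewrite -[K^T]mul1mx -(pairing_mxK R 4) -[LHS]mulmxA OmKT mulmxN mulmxA.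
Qed.

Lemma Rblock_skew K : K^T = - (Om *m K *m Om) -> (Rblock K)^T = - Rblock K.
Proof. by move=> KT; rewrite /Rblock trmx_dlsub KT raddfN /= ursubmx_pairing_conj. Qed.

Lemma dlsubmx_mul_sym K1 K2 :
  K1^T = - (Om *m K1 *m Om) -> K2^T = - (Om *m K2 *m Om) -> K1 *m K2 = K2 *m K1 ->
  (dlsubmx (K1 *m K2))^T = dlsubmx (K1 *m K2).
Proof.
move=> KT1 KT2 comm.
have : (K1 *m K2)^T = Om *m (K1 *m K2) *m Om.
  rewrite trmx_mul KT1 KT2 mulNmx mulmxN opprK !mulmxA -(mulmxA _ Om Om) pairing_mxK.
  by rewrite mulmx1 -(mulmxA Om K2) -comm !mulmxA.
by rewrite trmx_dlsub => ->; rewrite ursubmx_pairing_conj.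
Qed.

Lemma npair_dual K v :
  npair (app K (row_mx 0 v)) (row_mx 0 v) = 2^-1 * bform (dlsubmx K) v v.
Proof.
rewrite /npair /app row_mxKl row_mxKr !evalfE trmx0 mulmx0 mxE add0r.
rewrite -[K]submxK mul_row_block mul0mx add0r row_mxKl block_mxKdl /bform.
congr (_ * _); transitivity ((v *m (v *m dlsubmx K)^T)^T 0 0); first by rewrite [RHS]mxE.
by rewrite !trmx_mul !trmxK.
Qed.

End GeneralizedComplexBlocks.

Lemma gc_typeE (R : realType) (K : 'M[R]_(4 + 4)) :
  gc_type K = (4 - \rank (Rblock K))./2%N.
Proof. by rewrite /gc_type mxrank_ker mxrank_tr. Qed.

Lemma gen_kahler_dual_pos (R : realType) (K1 K2 : 'M[R]_(4 + 4)) :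
  K1 *m K2 = K2 *m K1 ->
  (forall x, x != 0 -> 0 < npair (app K1 (app K2 x)) x) ->
  forall v, v != 0 -> 0 < bform (dlsubmx (K1 *m K2)) v v.
Proof.
move=> comm pos v nzv.
have nzx : row_mx 0 v != 0 :> 'rV[R]_(4 + 4).
  by apply: contra_neq nzv; rewrite -row_mx0 => /eq_row_mx[].
have := pos _ nzx; rewrite /app -mulmxA -comm -/(app _ _) npair_dual.
by rewrite pmulr_rgt0 // invr_gt0 ltr0n.
Qed.

Theorem proposition4p1 (R : realType) (br : 'rV[R]_4 -> 'rV[R]_4 -> 'rV[R]_4)
    (K1 K2 : 'M[R]_(4 + 4)) :
  lie_bracket br -> gen_kahler br K1 K2 ->
  gc_type K1 <> 2%N -> gc_type K2 <> 2%N ->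
  (gc_type K1 = 0%N /\ gc_type K2 = 0%N) \/
  [/\ gc_type K1 = 1%N, gc_type K2 = 1%N &
      (Rblock K1 :&: Rblock K2 == (0 : 'M[R]_4))%MS].
Proof.
move=> _ [[sq1 orth1 _] [sq2 orth2 _] comm pos] t1 t2.
have [KT1 KT2] := (npair_skew_trmx orth1, npair_skew_trmx orth2).
have symG := dlsubmx_mul_sym KT1 KT2 comm.
have posG := gen_kahler_dual_pos comm pos.
have [sq_sum anticomm] := dlsubmx_commuting_cplx sq1 sq2 comm (pos_form_unitmx posG).
have nzR (K : 'M[R]_(4 + 4)) : gc_type K <> 2%N -> Rblock K != 0.
  by move=> tK; apply/eqP => R0; apply: tK; rewrite gc_typeE R0 mxrank0.
have := skew_pair_ranks symG posG (Rblock_skew KT1) (Rblock_skew KT2) sq_sum anticomm.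
rewrite !gc_typeE => /(_ (nzR _ t1) (nzR _ t2)) [[-> ->]|[-> -> cap]].
- by left.
- by right.
Qed.
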